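(* For any positive integers $q$ and $k$ with $k\ge2$ and any $A\subseteq\mathbb{N}$, the Cayley graph $G(\mathbb{Z}^2,\pm AD_{q,k})$ is isomorphic to a subgraph of the graph with vertex set $\mathbb{R}^2$ in which two points are adjacent if their Euclidean distance lies in $A$.
   Context: For a set $C'\subseteq\mathbb{Z}^2\setminus\{0\}$ with $C'=-C'$, $G(\mathbb{Z}^2,C')$ is the Cayley graph with vertex set $\mathbb{Z}^2$ in which $u,v$ are adjacent iff $v-u\in C'$. For positive integers $q,k$ with $k\ge2$, let $X_{q,k}=\prod_{j=1}^{k-1}(q^{k+j}+q^{k-j}+1)$ and let $D_{q,k}\subseteq\mathbb{Z}^2$ consist of the points $\frac{X_{q,k}}{q^{k+j}+q^{k-j}+1}\left(q^{k+j}-q^{k-j},\,-q^j-2q^k\right)$ for $j=1,\ldots,k-1$. $\pm AD_{q,k}$ is the set of all $\pm ad$ with $a\in A$, $d\in D_{q,k}$. *)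

From Stdlib Require Import Reals ZArith List.
Import ListNotations.
Open Scope Z_scope.

Definition fac (q k j : Z) : Z := q ^ (k + j) + q ^ (k - j) + 1.

Definition Xqk (q k : Z) : Z :=
  fold_right Z.mul 1 (map (fun j => fac q k (Z.of_nat j)) (seq 1 (Z.to_nat (k - 1)))).

(* The j-th point of D_{q,k}:  X/(fac j) * (q^(k+j) - q^(k-j), -q^j - 2 q^k).
   The division is exact since fac j is a factor of X. *)
Definition Dpt (q k j : Z) : Z * Z :=
  let c := Xqk q k / fac q k j in
  (c * (q ^ (k + j) - q ^ (k - j)), c * (- q ^ j - 2 * q ^ k)).

Definition in_pmAD (A : nat -> Prop) (q k : Z) (w : Z * Z) : Prop :=
  exists (a : nat) (j : Z) (s : Z),
    A a /\ 1 <= j <= k - 1 /\ (s = 1 \/ s = -1) /\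
    w = (s * Z.of_nat a * fst (Dpt q k j), s * Z.of_nat a * snd (Dpt q k j)).

Definition cayley_adj (C : Z * Z -> Prop) (u v : Z * Z) : Prop :=
  C (fst v - fst u, snd v - snd u).

Close Scope Z_scope.
Open Scope R_scope.

Definition euclid_dist (x y : R * R) : R :=
  sqrt ((fst x - fst y) ^ 2 + (snd x - snd y) ^ 2).

Definition dist_adj (A : nat -> Prop) (x y : R * R) : Prop :=
  exists a : nat, A a /\ euclid_dist x y = INR a.

Definition iso_to_subgraph {V W : Type} (adj1 : V -> V -> Prop) (adj2 : W -> W -> Prop) : Prop :=
  exists f : V -> W, (forall u v, f u = f v -> u = v) /\
    (forall u v, adj1 u v -> adj2 (f u) (f v)).

(** The quadratic form [Q(x, y) = m (x^2 + y^2) + x y] with [m = q^k] is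
    positive definite, so some linear map [L] of the plane satisfies
    [|L w|^2 = 4 m Q(w)]: take [L(x, y) = (2 m x + y, sqrt(4 m^2 - 1) y)].
    The points of [D_{q,k}] are built so that [Q(d) = m X^2] for all of
    them; hence, after rescaling [L] by [1 / (2 m X)], every difference
    [± a d] of adjacent lattice points is sent to a vector of length [a]. *)

From Stdlib Require Import Reals ZArith List.
From Stdlib Require Import Lra Lia Psatz.

Open Scope Z_scope.

Lemma divide_fold_mul (g : nat -> Z) (l : list nat) (x : nat) :
  In x l -> (g x | fold_right Z.mul 1 (map g l)).
Proof.
  induction l as [|y l IH]; simpl; [tauto|].
  intros [->|H].
  - apply Z.divide_mul_l, Z.divide_refl.
  - apply Z.divide_mul_r; auto.
Qed.

Lemma fold_mul_pos (g : nat -> Z) (l : list nat) :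
  (forall x, 0 < g x) -> 0 < fold_right Z.mul 1 (map g l).
Proof.
  intros Hg; induction l as [|y l IH]; simpl; [lia|].
  apply Z.mul_pos_pos; auto.
Qed.

Lemma fac_pos q k j : 1 <= q -> 0 < fac q k j.
Proof.
  intros Hq; unfold fac.
  assert (0 <= q ^ (k + j)) by (apply Z.pow_nonneg; lia).
  assert (0 <= q ^ (k - j)) by (apply Z.pow_nonneg; lia).
  lia.
Qed.

Lemma Xqk_pos q k : 1 <= q -> 0 < Xqk q k.
Proof. intros Hq; apply fold_mul_pos; intros; apply fac_pos, Hq. Qed.

Lemma fac_divide_Xqk q k j : 1 <= j <= k - 1 -> (fac q k j | Xqk q k).
Proof.
  intros Hj; rewrite <- (Z2Nat.id j) by lia.
  apply (divide_fold_mul (fun i => fac q k (Z.of_nat i))), in_seq; lia.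
Qed.

Close Scope Z_scope.
Open Scope R_scope.

Definition qform (m x y : R) : R := m * (x ^ 2 + y ^ 2) + x * y.

Lemma qform_scale m t x y : qform m (t * x) (t * y) = t ^ 2 * qform m x y.
Proof. unfold qform; ring. Qed.

Lemma qform_Dpt q k j : (1 <= q)%Z -> (1 <= j <= k - 1)%Z ->
  qform (IZR (q ^ k)) (IZR (fst (Dpt q k j))) (IZR (snd (Dpt q k j)))
  = IZR (q ^ k) * IZR (Xqk q k) ^ 2.
Proof.
  intros Hq Hj.
  assert (Hf := fac_pos q k j Hq).
  assert (HX : Xqk q k = (fac q k j * (Xqk q k / fac q k j))%Z).
  { apply Z.div_exact; [lia|].
    apply Z.mod_divide; [lia|]. apply fac_divide_Xqk, Hj. }
  assert (Ekj : (q ^ (k + j) = q ^ j * q ^ j * q ^ (k - j))%Z).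
  { rewrite <- !Z.pow_add_r by lia. f_equal. lia. }
  assert (Ek : (q ^ k = q ^ j * q ^ (k - j))%Z).
  { rewrite <- !Z.pow_add_r by lia. f_equal. lia. }
  (* With [u = q^j] and [v = q^(k-j)], what remains is a polynomial identity in [u], [v], [c]. *)
  unfold Dpt; cbv [fst snd].
  set (c := (Xqk q k / fac q k j)%Z) in *.
  rewrite HX; unfold fac; rewrite Ekj, Ek.
  rewrite ?mult_IZR, ?minus_IZR, ?plus_IZR, ?opp_IZR, ?mult_IZR.
  unfold qform; ring.
Qed.

Lemma in_pmAD_qform (A : nat -> Prop) q k x y : (1 <= q)%Z ->
  in_pmAD A q k (x, y) ->
  exists a, A a /\
    qform (IZR (q ^ k)) (IZR x) (IZR y)
    = INR a ^ 2 * (IZR (q ^ k) * IZR (Xqk q k) ^ 2).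
Proof.
  intros Hq (a & j & s & Ha & Hj & Hs & Hw).
  pose proof (f_equal fst Hw) as Hx; pose proof (f_equal snd Hw) as Hy.
  cbn [fst snd] in Hx, Hy; subst x y.
  exists a; split; [exact Ha|].
  rewrite !mult_IZR, <- INR_IZR_INZ, qform_scale, qform_Dpt by assumption.
  f_equal.
  destruct Hs as [-> | ->]; simpl; ring.
Qed.

Definition lattice_embedding (m r : R) (p : Z * Z) : R * R :=
  (r * (2 * m * IZR (fst p) + IZR (snd p)),
   r * sqrt (4 * m ^ 2 - 1) * IZR (snd p)).

Lemma lattice_embedding_dist m r u v : 1 / 2 <= m ->
  euclid_dist (lattice_embedding m r u) (lattice_embedding m r v)
  = sqrt (4 * m * r ^ 2 * qform m (IZR (fst v - fst u)) (IZR (snd v - snd u))).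
Proof.
  intros Hm; destruct u as [ux uy], v as [vx vy].
  set (S := sqrt (4 * m ^ 2 - 1)).
  assert (HS : S * S = 4 * m ^ 2 - 1) by (apply sqrt_sqrt; nra).
  unfold euclid_dist, lattice_embedding; cbv [fst snd]; fold S.
  rewrite !minus_IZR; f_equal.
  transitivity (r ^ 2 * ((2 * m * (IZR vx - IZR ux) + (IZR vy - IZR uy)) ^ 2
                         + (S * S) * (IZR vy - IZR uy) ^ 2)); [ring|].
  rewrite HS; unfold qform; ring.
Qed.

Lemma lattice_embedding_inj m r u v : 1 / 2 < m -> r <> 0 ->
  lattice_embedding m r u = lattice_embedding m r v -> u = v.
Proof.
  intros Hm Hr; destruct u as [ux uy], v as [vx vy].
  unfold lattice_embedding; cbv [fst snd]; intros [= Hx Hy].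
  assert (HS : 0 < sqrt (4 * m ^ 2 - 1)) by (apply sqrt_lt_R0; nra).
  assert (Ey : IZR uy = IZR vy).
  { apply (Rmult_eq_reg_l (r * sqrt (4 * m ^ 2 - 1))); [exact Hy|].
    apply Rmult_integral_contrapositive; split; lra. }
  rewrite Ey in Hx.
  assert (Ex : IZR ux = IZR vx).
  { apply (Rmult_eq_reg_l (r * (2 * m))); [lra|].
    apply Rmult_integral_contrapositive; split; lra. }
  apply eq_IZR in Ex, Ey; subst; reflexivity.
Qed.

Theorem lemma4 (q k : Z) (A : nat -> Prop) :
  (1 <= q)%Z -> (2 <= k)%Z ->
  iso_to_subgraph (cayley_adj (in_pmAD A q k)) (dist_adj A).
Proof.
  intros Hq Hk.
  set (m := IZR (q ^ k)); set (X := IZR (Xqk q k)).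
  assert (Hm : 1 <= m).
  { apply IZR_le; assert (0 < q ^ k)%Z by (apply Z.pow_pos_nonneg; lia); lia. }
  assert (HX : 1 <= X) by (apply IZR_le; pose proof (Xqk_pos q k Hq); lia).
  exists (lattice_embedding m (1 / (2 * m * X))); split.
  - intros u v; apply lattice_embedding_inj; [lra|].
    apply Rgt_not_eq, Rdiv_lt_0_compat; nra.
  - intros u v Huv.
    destruct (in_pmAD_qform A q k _ _ Hq Huv) as (a & Ha & Hqf).
    exists a; split; [exact Ha|].
    rewrite lattice_embedding_dist by lra.
    fold m X in Hqf; rewrite Hqf.
    replace (4 * m * (1 / (2 * m * X)) ^ 2 * (INR a ^ 2 * (m * X ^ 2)))
      with (INR a ^ 2) by (field; lra).
    apply sqrt_pow2, pos_INR.
Qed.
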